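(* Let $\mathbb{F}$ be a field, let $V$ be an infinite-dimensional vector space over $\mathbb{F}$, and let $p_1,p_2,p_3\in\mathbb{F}[t]$ be split polynomials of degree $2$. Let $u$ be an endomorphism of $V$ with a dominant eigenvalue $\lambda$, and assume that $u$ is a $(p_1,p_2,p_3)$-sum. Then $\lambda$ is a $(p_1,p_2,p_3)$-sum (as a scalar) or $2\lambda=\operatorname{tr}p_1+\operatorname{tr}p_2+\operatorname{tr}p_3$.
   Context: A scalar $\lambda$ is a dominant eigenvalue of $u\in\mathrm{End}(V)$ if $\operatorname{rk}(u-\lambda\,\mathrm{id}_V)<\dim V$. An endomorphism $u$ is a $(p_1,p_2,p_3)$-sum if $u=u_1+u_2+u_3$ for some endomorphisms $u_k$ of $V$ with $p_k(u_k)=0$ for all $k$. A scalar $\lambda$ is a $(p_1,p_2,p_3)$-sum if $\lambda=x_1+x_2+x_3$ for some $x_1,x_2,x_3\in\mathbb{F}$ with $p_k(x_k)=0$ for all $k$. The trace of a monic polynomial of degree $n>0$ is the opposite of its coefficient on $t^{n-1}$; the trace $\operatorname{tr}p$ of a nonconstant polynomial $p$ with leading coefficient $\alpha$ is the trace of $\alpha^{-1}p$. *)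

From mathcomp Require Import all_boot all_order all_algebra.
Set Implicit Arguments. Unset Strict Implicit. Unset Printing Implicit Defensive.
Import GRing.Theory.
Local Open Scope ring_scope.

Section Defs.
Variables (F : fieldType) (V : lmodType F).

Definition lincomb (s : seq V) (c : seq F) : V :=
  \sum_(i < size s) c`_i *: s`_i.

Definition in_span (S : V -> Prop) (v : V) : Prop :=
  exists (s : seq V) (c : seq F), (forall x, x \in s -> S x) /\ v = lincomb s c.

Definition lin_free (S : V -> Prop) : Prop :=
  forall (s : seq V) (c : seq F), uniq s -> (forall x, x \in s -> S x) ->
    lincomb s c = 0 -> forall i, (i < size s)%N -> c`_i = 0.

Definition basis_of_sub (W B : V -> Prop) : Prop :=
  (forall x, B x -> W x) /\ lin_free B /\ (forall w, W w -> in_span B w).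

Definition infinite_dim : Prop :=
  ~ exists s : seq V, forall v, in_span (fun x => x \in s) v.

Definition is_endo (u : V -> V) : Prop := linear u.

Definition peval_endo (p : {poly F}) (u : V -> V) (v : V) : V :=
  \sum_(i < size p) p`_i *: iter i u v.

Definition card_leq (A B : V -> Prop) : Prop :=
  exists f : V -> V, (forall x, A x -> B (f x)) /\
    (forall x y, A x -> A y -> f x = f y -> x = y).

(* rk w < dim V : Im w has a basis of cardinality strictly less than
   that of a basis of V *)
Definition rank_lt_dim (w : V -> V) : Prop :=
  exists B C : V -> Prop,
    basis_of_sub (fun y => exists x, y = w x) B /\
    basis_of_sub (fun _ => True) C /\ ~ card_leq C B.

Definition dominant_eigenvalue (u : V -> V) (lambda : F) : Prop :=
  rank_lt_dim (fun v => u v - lambda *: v).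

Definition endo_sum3 (p1 p2 p3 : {poly F}) (u : V -> V) : Prop :=
  exists u1 u2 u3 : V -> V,
    [/\ is_endo u1, is_endo u2 & is_endo u3] /\
    (forall v, u v = u1 v + u2 v + u3 v) /\
    (forall v, peval_endo p1 u1 v = 0) /\
    (forall v, peval_endo p2 u2 v = 0) /\
    (forall v, peval_endo p3 u3 v = 0).
End Defs.

Section ScalarDefs.
Variable F : fieldType.

Definition scalar_sum3 (p1 p2 p3 : {poly F}) (lambda : F) : Prop :=
  exists x1 x2 x3 : F, lambda = x1 + x2 + x3 /\
    [/\ root p1 x1, root p2 x2 & root p3 x3].

Definition split_deg2 (p : {poly F}) : Prop :=
  size p = 3%N /\ exists a b : F, p = lead_coef p *: (('X - a%:P) * ('X - b%:P)).

(* trace of a nonconstant polynomial: minus the coefficient on t^(n-1)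
   of the monic polynomial lead_coef(p)^-1 p *)
Definition poly_trace (p : {poly F}) : F :=
  - (p`_(size p - 2) / lead_coef p).
End ScalarDefs.

From HB Require Import structures.
From mathcomp Require Import all_boot all_order all_algebra.
From mathcomp Require Import ring.
From mathcomp Require Import boolp classical_sets.
Import GRing.Theory.
Set Implicit Arguments. Unset Strict Implicit. Unset Printing Implicit Defensive.
Local Open Scope ring_scope.
Local Open Scope classical_set_scope.

(* Write u_i = a_i + e_i, so that e_i^2 = d_i e_i with d_i = b_i - a_i, and
   put w = u - lambda, mu = lambda - a_1 - a_2 - a_3, so that
   e_3 = mu - e_1 - e_2 + w.  Let W_k be the span of the vectors s(w v) for
   the words s of length at most k in e_1 and e_2.  Modulo W_1, the relation
   e_3^2 = d_3 e_3 becomes a quadratic relation between e_1 and e_2; combined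
   with e_i^2 = d_i e_i it can be solved successively for e_1 e_2 - e_2 e_1,
   e_1 e_2, e_1, e_2 and finally the identity, each time dividing by
   2 lambda - tr p_1 - tr p_2 - tr p_3 or by a product of two differences
   lambda - (x_1 + x_2 + x_3) with p_k(x_k) = 0.  Unless one of these
   vanishes, V = W_4 is spanned by the images of Im w under 31 linear maps.
   Hence V is finite-dimensional if Im w is.  Otherwise, for bases B of Im w
   and C of V, sending c in C to (t, n), where t is one of these 31 images of
   an element of B whose expansion in C involves c and n is the position of c
   in that expansion, injects C into (31 copies of B) x N; Hessenberg's
   theorem k x k ~ k for infinite k then gives rk w >= dim V. *)

Section SquareZeroExtension.
Variables (F : fieldType) (V : lmodType F).

Definition sqz := (F * V)%type.
HB.instance Definition _ := GRing.Zmodule.on sqz.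

Definition sqz_one : sqz := (1, 0).
Definition sqz_mul (p q : sqz) : sqz := (p.1 * q.1, p.1 *: q.2 + q.1 *: p.2).

Lemma sqz_mulA : associative sqz_mul.
Proof.
move=> [a u] [b v] [c t]; rewrite /sqz_mul /=; congr (_, _); first by rewrite mulrA.
by rewrite !scalerDr !scalerA -!addrA (mulrC c a) (mulrC c b).
Qed.

Lemma sqz_mulC : commutative sqz_mul.
Proof. by move=> [a u] [b v]; rewrite /sqz_mul /= mulrC addrC. Qed.

Lemma sqz_mul1 : left_id sqz_one sqz_mul.
Proof. by move=> [a u]; rewrite /sqz_mul /= mul1r scale1r scaler0 addr0. Qed.

Lemma sqz_mulDl : left_distributive sqz_mul +%R.
Proof.
move=> [a u] [b v] [c t]; rewrite /sqz_mul /=; congr (_, _); first by rewrite mulrDl.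
by rewrite scalerDl scalerDr addrACA.
Qed.

Lemma sqz_one_neq0 : sqz_one != 0.
Proof. by apply/eqP => -[] /eqP; rewrite oner_eq0. Qed.

HB.instance Definition _ := GRing.Zmodule_isComNzRing.Build sqz
  sqz_mulA sqz_mulC sqz_mul1 sqz_mulDl sqz_one_neq0.

Definition sqz_scalar (k : F) : sqz := (k, 0).
Definition sqz_vec (v : V) : sqz := (0, v).

Lemma sqz_scalarD a b : sqz_scalar (a + b) = sqz_scalar a + sqz_scalar b.
Proof. by rewrite /sqz_scalar; congr (_, _); rewrite addr0. Qed.

Lemma sqz_scalarN a : sqz_scalar (- a) = - sqz_scalar a.
Proof. by rewrite /sqz_scalar; congr (_, _); rewrite oppr0. Qed.

Lemma sqz_scalarM a b : sqz_scalar (a * b) = sqz_scalar a * sqz_scalar b.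
Proof. by rewrite /sqz_scalar /GRing.mul /= /sqz_mul /= !scaler0 addr0. Qed.

Lemma sqz_scalarMn a n : sqz_scalar (a *+ n) = sqz_scalar a *+ n.
Proof. by elim: n => [|n IHn]; rewrite ?mulr0n // !mulrS sqz_scalarD IHn. Qed.

Lemma sqz_vec0 : sqz_vec 0 = 0.
Proof. by []. Qed.

Lemma sqz_vecD u v : sqz_vec (u + v) = sqz_vec u + sqz_vec v.
Proof. by rewrite /sqz_vec; congr (_, _); rewrite addr0. Qed.

Lemma sqz_vecN v : sqz_vec (- v) = - sqz_vec v.
Proof. by rewrite /sqz_vec; congr (_, _); rewrite oppr0. Qed.

Lemma sqz_vecZ k v : sqz_vec (k *: v) = sqz_scalar k * sqz_vec v.
Proof.
by rewrite /sqz_vec /sqz_scalar /GRing.mul /= /sqz_mul /= mulr0 scaler0 addr0.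
Qed.

Lemma sqz_vec_inj : injective sqz_vec.
Proof. by move=> u v []. Qed.

End SquareZeroExtension.

(* Identities between linear combinations in V are proved by [ring] in the
   commutative ring F ⋉ V, in which V is an ideal of square zero. *)
Ltac lin_ring := apply: sqz_vec_inj;
  rewrite ?(sqz_vec0, sqz_vecD, sqz_vecN, sqz_vecZ)
    ?(sqz_scalarD, sqz_scalarN, sqz_scalarM, sqz_scalarMn); ring.

Section LinearSpan.
Variables (F : fieldType) (V : lmodType F).
Implicit Types (S T : set V) (v : V).

Definition lspan S v := exists l : seq (F * V),
  (forall p, p \in l -> S p.2) /\ v = \sum_(p <- l) p.1 *: p.2.

Lemma lspan0 S : lspan S 0.
Proof. by exists [::]; rewrite big_nil. Qed.

Lemma lspan_gen S v : S v -> lspan S v.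
Proof.
exists [:: (1, v)]; rewrite big_seq1 scale1r; split=> // p.
by rewrite inE => /eqP ->.
Qed.

Lemma lspanD S u v : lspan S u -> lspan S v -> lspan S (u + v).
Proof.
move=> [l1 [S1 ->]] [l2 [S2 ->]]; exists (l1 ++ l2); rewrite big_cat; split=> // p.
by rewrite mem_cat => /orP[/S1|/S2].
Qed.

Lemma lspanZ S k v : lspan S v -> lspan S (k *: v).
Proof.
move=> [l [Sl ->]]; exists [seq (k * p.1, p.2) | p <- l]; split.
  by move=> ? /mapP[p pl ->]; exact: Sl pl.
by rewrite big_map scaler_sumr; apply: eq_bigr => p _; rewrite scalerA.
Qed.

Lemma lspanN S v : lspan S v -> lspan S (- v).
Proof. by rewrite -scaleN1r; exact: lspanZ. Qed.

Lemma lspanB S u v : lspan S u -> lspan S v -> lspan S (u - v).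
Proof. by move=> Su /lspanN; exact: lspanD. Qed.

Lemma lspanZ_inv S k v : k != 0 -> lspan S (k *: v) -> lspan S v.
Proof. by move=> k0 /(lspanZ k^-1); rewrite scalerA mulVf // scale1r. Qed.

Lemma lspan_sum S (l : seq (F * V)) : (forall p, p \in l -> lspan S p.2) ->
  lspan S (\sum_(p <- l) p.1 *: p.2).
Proof.
elim: l => [|p l IHl] Sl; first by rewrite big_nil; exact: lspan0.
rewrite big_cons; apply: lspanD; first by apply/lspanZ/Sl; rewrite inE eqxx.
by apply: IHl => q ql; apply: Sl; rewrite inE ql orbT.
Qed.

Lemma sub_lspan S T v : (forall t, S t -> lspan T t) -> lspan S v -> lspan T v.
Proof. by move=> ST [l [Sl ->]]; apply: lspan_sum => p /Sl /ST. Qed.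

Lemma lspan_linear S T (f : V -> V) v : linear f ->
  (forall t, S t -> lspan T (f t)) -> lspan S v -> lspan T (f v).
Proof.
move=> f_lin ST [l [Sl ->]].
pose fL : {linear V -> V} := HB.pack f (GRing.isLinear.Build _ _ _ _ f f_lin).
rewrite -[f _]/(fL _) linear_sum.
under eq_bigr do rewrite linearZ.
rewrite -(big_map (fun p => (p.1, f p.2)) xpredT (fun p => p.1 *: p.2)).
by apply: lspan_sum => ? /mapP[p pl ->]; apply/ST/Sl.
Qed.

Lemma in_spanE S v : in_span S v <-> lspan S v.
Proof.
split=> [[s [c [Ss ->]]]|[l [Sl ->]]].
  exists [seq (c`_i, s`_i) | i <- iota 0 (size s)]; split.
    by move=> ? /mapP[i]; rewrite mem_iota => /andP[_ ilt] ->; apply/Ss/mem_nth.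
  by rewrite big_map /lincomb -(big_mkord xpredT (fun i => c`_i *: s`_i)) /index_iota subn0.
exists (map snd l), (map fst l); split; first by move=> ? /mapP[p pl ->]; exact: Sl pl.
rewrite /lincomb size_map (big_nth (0, 0)) big_mkord; apply: eq_bigr => i _.
by rewrite !(nth_map (0, 0)).
Qed.

Lemma lincomb_cons (v : V) s a c : lincomb (v :: s) (a :: c) = a *: v + lincomb s c.
Proof. by rewrite /lincomb big_ord_recl. Qed.

Lemma lspan_coord (ts : seq V) v : lspan (fun t => t \in ts) v ->
  exists cs, v = lincomb ts cs.
Proof.
move=> [l [tsl ->]].
suff [g ->] : exists g : nat -> F, \sum_(p <- l) p.1 *: p.2 = \sum_(i < size ts) g i *: ts`_i.
  by exists (mkseq g (size ts)); apply: eq_bigr => i _; rewrite nth_mkseq.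
elim: l tsl => [|p l IHl] tsl.
  by exists (fun=> 0); rewrite big_nil big1 // => i _; rewrite scale0r.
rewrite big_cons; have [|g ->] := IHl; first by move=> q ql; apply: tsl; rewrite inE ql orbT.
have p_ts : p.2 \in ts by apply: tsl; rewrite inE eqxx.
exists (fun i => g i + (if i == index p.2 ts then p.1 else 0)).
under [RHS]eq_bigr do rewrite scalerDl.
rewrite big_split /= addrC; congr (_ + _).
rewrite (bigD1 (Ordinal (etrans (index_mem p.2 ts) p_ts))) //= eqxx nth_index //.
by rewrite big1 ?addr0 // => i /negPf; rewrite -val_eqE /= => ->; rewrite scale0r.
Qed.

Lemma lin_free_notin_lspan C c : lin_free C -> C c ->
  ~ lspan (fun d => C d /\ d <> c) c.
Proof.
move=> Cfree Cc [l [Cl Ec]].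
pose ts := undup [seq p.2 | p <- l].
have ts_l t : t \in ts -> C t /\ t <> c.
  by rewrite mem_undup => /mapP[p /Cl Cp ->].
have [cs Ecs] : exists cs, c = lincomb ts cs.
  apply: lspan_coord; rewrite Ec; apply: lspan_sum => p pl; apply: lspan_gen.
  by rewrite mem_undup; apply: map_f.
have : (-1 : F) = 0.
  apply: (Cfree (c :: ts) (-1 :: cs) _ _ _ 0%N isT).
  - by rewrite /= undup_uniq andbT; apply/negP => /ts_l[].
  - by move=> t; rewrite inE => /orP[/eqP -> //|/ts_l[]].
  by rewrite lincomb_cons scaleN1r -Ecs addNr.
by move/eqP; rewrite oppr_eq0 oner_eq0.
Qed.

End LinearSpan.

Definition inj_on (T U : Type) (A : set T) (f : T -> U) :=
  forall x y, A x -> A y -> f x = f y -> x = y.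

Definition injects (T U : Type) (A : set T) (B : set U) :=
  exists f : T -> U, {homo f : x / A x >-> B x} /\ inj_on A f.

Lemma injects_trans (T U W : Type) (A : set T) (B : set U) (C : set W) :
  injects A B -> injects B C -> injects A C.
Proof.
move=> [f [fAB f_inj]] [g [gBC g_inj]]; exists (g \o f); split=> [x Ax|x y Ax Ay].
  exact/gBC/fAB.
by move/(g_inj _ _ (fAB _ Ax) (fAB _ Ay)); exact: f_inj.
Qed.

Lemma zorn_nonempty_chains (S : Type) (P : set S) (R : S -> S -> Prop) (s0 : S) :
  P s0 -> (forall s, R s s) -> (forall r s t, R r s -> R s t -> R r t) ->
  (forall Ch : set S, Ch `<=` P -> Ch !=set0 -> total_on Ch R ->
     exists2 m, P m & forall s, Ch s -> R s m) ->
  exists2 m, P m & forall s, P s -> R m s -> R s m.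
Proof.
move=> Ps0 R_refl R_trans chain_ub.
pose R' (p q : {s | P s}) := `[< R (sval p) (sval q) >].
have [||Ch' Ch'_tot|m m_max] := @ZL_preorder _ (exist _ s0 Ps0) R'.
- by move=> p; apply/asboolP.
- by move=> p q r /asboolP pq /asboolP qr; apply/asboolP; exact: R_trans pq qr.
- have [[p0 Ch'p0]|Ch'0] := pselect (exists p, Ch' p); last first.
    by exists (exist _ s0 Ps0) => p Ch'p; case: Ch'0; exists p.
  pose Ch s := exists2 p, Ch' p & sval p = s.
  have [||s t [p1 Ch'p1 <-] [q Ch'q <-]|m Pm m_ub] := chain_ub Ch.
  + by move=> s [p _ <-]; exact: svalP.
  + by exists (sval p0), p0.
  + by case: (Ch'_tot p1 q) => // /asboolP; [left|right].
  by exists (exist _ m Pm) => q Ch'q; apply/asboolP/m_ub; exists q.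
- exists (sval m); first exact: svalP.
  by move=> s Ps Rms; apply/asboolP/(m_max (exist _ s Ps)); exact/asboolP.
Qed.

Lemma glue_compatible (I A U : Type) (dom : I -> set A) (fn : I -> A -> U)
    (f0 : A -> U) :
  (forall i j a, dom i a -> dom j a -> fn i a = fn j a) ->
  exists f : A -> U, forall i a, dom i a -> f a = fn i a.
Proof.
move=> compat.
have /choice[f fP] : forall a, exists u, forall i, dom i a -> u = fn i a.
  move=> a; have [[i dia]|nodom] := pselect (exists i, dom i a).
    by exists (fn i a) => j dja; exact: compat.
  by exists (f0 a) => j dja; case: nodom; exists j.
by exists f => i a /fP.
Qed.

Section Comparability.
Variables (T : Type) (A D : set T).

Let pinj (p : set T * (T -> T)) :=
  [/\ p.1 `<=` A, {homo p.2 : t / p.1 t >-> D t} & inj_on p.1 p.2].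
Let extends (p q : set T * (T -> T)) :=
  p.1 `<=` q.1 /\ forall t, p.1 t -> q.2 t = p.2 t.

Let maximal_pinj :
  exists2 m, pinj m & forall p, pinj p -> extends m p -> p.1 `<=` m.1.
Proof.
have [||||m pm m_max] := @zorn_nonempty_chains _ pinj extends (set0, id).
- by split=> // t [].
- by move=> p; split.
- move=> p q r [pq1 pq2] [qr1 qr2]; split=> [t /pq1/qr1 //|t pt].
  by rewrite qr2 ?pq2 //; exact: pq1.
- move=> Ch Ch_pinj _ Ch_tot.
  have compat p q t : Ch p /\ p.1 t -> Ch q /\ q.1 t -> p.2 t = q.2 t.
    move=> [Chp pt] [Chq qt].
    by case: (Ch_tot p q Chp Chq) => -[_ E]; rewrite E.
  have [f fP] := glue_compatible id compat.
  pose X t := exists2 p, Ch p & p.1 t.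
  have in_common s t : X s -> X t -> exists2 r, Ch r & r.1 s /\ r.1 t.
    move=> [p Chp ps] [q Chq qt].
    by case: (Ch_tot p q Chp Chq) => -[sub _]; [exists q | exists p]; try split; auto.
  exists (X, f) => [|p Chp]; last first.
    by split=> [t pt|t pt]; [exists p | exact: fP (conj Chp pt)].
  split=> [t [p /Ch_pinj[pA _ _] /pA] //|t [p Chp pt]|s t Xs Xt].
    by rewrite /= (fP p t (conj Chp pt)); have [_ pD _] := Ch_pinj p Chp; exact: pD.
  have [r Chr [rs rt]] := in_common s t Xs Xt.
  rewrite /= (fP r s (conj Chr rs)) (fP r t (conj Chr rt)).
  by have [_ _ r_inj] := Ch_pinj r Chr; exact: r_inj.
by exists m => // p pp /(m_max p pp)[].
Qed.

Lemma injects_total : injects A D \/ injects D A.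
Proof.
have [[X h] [XA hD h_inj] m_max] := maximal_pinj.
have [AX|/existsNP[a /not_implyP[Aa Xa]]] := pselect (A `<=` X).
  by left; exists h; split=> [t /AX/hD|s t /AX Xs /AX Xt]; [|exact: h_inj].
have [Dh|/existsNP[d /not_implyP[Dd hd]]] :=
  pselect (forall d, D d -> exists2 t, X t & h t = d).
  have /choice[k kP] : forall d, exists t, D d -> X t /\ h t = d.
    move=> e; have [/Dh[t Xt <-]|De] := pselect (D e); first by exists t.
    by exists e.
  right; exists k; split=> [d /kP[/XA] //|d e /kP[_ hd] /kP[_ he] kde].
  by rewrite -hd -he kde.
pose X' t := X t \/ t = a.
pose h' t := if `[< t = a >] then d else h t.
have h'E t : X t -> h' t = h t.
  by move=> Xt; rewrite /h' asboolF // => ta; case: Xa; rewrite -ta.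
suff : X' `<=` X by move/(_ a (or_intror erefl)).
apply: (m_max (X', h')); last by split=> [t Xt|t Xt]; [left | exact: h'E].
split=> /= [t [/XA //|->] //|t [Xt|->]|s t [Xs|->] [Xt|->] //].
- by rewrite h'E //; exact: hD.
- by rewrite /h' asboolT.
- by rewrite !h'E //; exact: h_inj.
- by rewrite (h'E s) // /h' asboolT // => hsd; case: hd; exists s.
- by rewrite (h'E t) // /h' asboolT // => dht; case: hd; exists t.
Qed.

End Comparability.

Definition embeds_square (T : Type) (X : set T) (f : T * T -> T) :=
  {homo f : ab / (X `*` X) ab >-> X ab} /\ inj_on (X `*` X) f.

Lemma embeds_squareX (T : Type) (X : set T) f x y :
  embeds_square X f -> X x -> X y -> X (f (x, y)).
Proof. by move=> [fX _] Xx Xy; exact: fX. Qed.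

Lemma embeds_square_inj (T : Type) (X : set T) f x y x' y' : embeds_square X f ->
  X x -> X y -> X x' -> X y' -> f (x, y) = f (x', y') -> x = x' /\ y = y'.
Proof.
by move=> [_ f_inj] Xx Xy Xx' Xy' /(f_inj (x, y) (x', y') (conj Xx Xy) (conj Xx' Xy'))[].
Qed.

Section Hessenberg.
Variables (T : Type) (B : set T) (g : nat -> T).
Hypotheses (gB : forall n, B (g n)) (g_inj : injective g).

(* The pairs of X ∪ h(X) outside X × X are coded injectively into X using
   the two membership bits and the projection back to X, then sent to h(X). *)
Let embeds_square_grow X f h : embeds_square X f -> (forall n, X (g n)) ->
  {homo h : t / X t >-> (~` X) t} -> inj_on X h ->
  exists f', embeds_square (X `|` h @` X) f' /\ forall ab, (X `*` X) ab -> f' ab = f ab.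
Proof.
move=> fXX gX hX h_inj; set Y := h @` X.
have /choice[hinv hinvP] : forall t, exists s, Y t -> X s /\ h s = t.
  move=> t; have [[s Xs <-]|Yt] := pselect (Y t); first by exists s.
  by exists t.
pose pi t := if `[< X t >] then t else hinv t.
have piX t : (X `|` Y) t -> X (pi t).
  by rewrite /pi; case: asboolP => // nXt [//|/hinvP[]].
have pi_inj s t : (X `|` Y) s -> (X `|` Y) t ->
    `[< X s >] = `[< X t >] -> pi s = pi t -> s = t.
  move=> Ss St EX; have Xst := asbool_eq_equiv EX; rewrite /pi.
  case: (asboolP (X s)) => Xs; case: (asboolP (X t)) => Xt //.
  - by case: (Xt (Xst.1 Xs)).
  - by case: (Xs (Xst.2 Xt)).
  case: Ss => // Ys; case: St => // Yt.
  by move=> E; rewrite -[s](hinvP s Ys).2 -[t](hinvP t Yt).2 E.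
pose code a b := f (g (pickle (`[< X a >], `[< X b >])), f (pi a, pi b)).
have codeX a b : (X `|` Y) a -> (X `|` Y) b -> X (code a b).
  by move=> Sa Sb; apply: (embeds_squareX fXX) => //; apply: (embeds_squareX fXX); exact: piX.
have code_inj a b c d : (X `|` Y) a -> (X `|` Y) b -> (X `|` Y) c -> (X `|` Y) d ->
    code a b = code c d -> (a, b) = (c, d).
  move=> Sa Sb Sc Sd /(embeds_square_inj fXX (gX _) (embeds_squareX fXX (piX a Sa) (piX b Sb))
    (gX _) (embeds_squareX fXX (piX c Sc) (piX d Sd))) [/g_inj/(pcan_inj pickleK)[Ea Eb]].
  move/(embeds_square_inj fXX (piX a Sa) (piX b Sb) (piX c Sc) (piX d Sd)).
  by move=> [/(pi_inj a c Sa Sc Ea) -> /(pi_inj b d Sb Sd Eb) ->].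
pose f' ab := if `[< (X `*` X) ab >] then f ab else h (code ab.1 ab.2).
exists f'; split; last by move=> ab Xab; rewrite /f' asboolT.
split=> [[a b] [Sa Sb]|[a b] [c d] [Sa Sb] [Sc Sd]]; rewrite /f'.
  case: asboolP => [[Xa Xb]|_]; first by left; exact: embeds_squareX fXX Xa Xb.
  by right; exists (code a b) => //; exact: codeX.
case: (asboolP ((X `*` X) (a, b))) => Xab; case: (asboolP ((X `*` X) (c, d))) => Xcd.
- by have [_] := fXX; apply.
- by move=> E; case: (hX _ (codeX c d Sc Sd)); rewrite -E; exact: fXX.1.
- by move=> E; case: (hX _ (codeX a b Sa Sb)); rewrite E; exact: fXX.1.
by move/(h_inj _ _ (codeX a b Sa Sb) (codeX c d Sc Sd)); exact: code_inj.
Qed.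

Let embeds_square_absorb X f h : embeds_square X f -> X `<=` B ->
  (forall n, X (g n)) -> {homo h : t / (B `\` X) t >-> X t} -> inj_on (B `\` X) h ->
  injects (B `*` B) B.
Proof.
move=> fXX XB gX hX h_inj.
pose k t := if `[< X t >] then t else h t.
have kX t : B t -> X (k t).
  by rewrite /k => Bt; case: asboolP => // Xt; exact: (hX t (conj Bt Xt)).
pose j t := f (k t, g (pickle `[< X t >])).
have jX t : B t -> X (j t) by move=> Bt; apply: (embeds_squareX fXX) => //; exact: kX.
have j_inj : inj_on B j.
  move=> s t Bs Bt /(embeds_square_inj fXX (kX _ Bs) (gX _) (kX _ Bt) (gX _)).
  rewrite /k => -[+ /g_inj/(pcan_inj pickleK)].
  case: (asboolP (X s)) => Xs; case: (asboolP (X t)) => Xt // E _.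
  exact: h_inj E.
exists (fun ab => f (j ab.1, j ab.2)); split=> [[a b] [Ba Bb]|[a b] [c d] [Ba Bb] [Bc Bd]].
  by apply/XB/(embeds_squareX fXX); exact: jX.
move/(embeds_square_inj fXX (jX a Ba) (jX b Bb) (jX c Bc) (jX d Bd)).
by move=> [/(j_inj a c Ba Bc) -> /(j_inj b d Bb Bd) ->].
Qed.

Let admissible (p : set T * (T * T -> T)) :=
  [/\ p.1 `<=` B, forall n, p.1 (g n) & embeds_square p.1 p.2].
Let extends (p q : set T * (T * T -> T)) :=
  p.1 `<=` q.1 /\ forall ab, (p.1 `*` p.1) ab -> q.2 ab = p.2 ab.

Let admissible_chain_ub Ch :
  Ch `<=` admissible -> Ch !=set0 -> total_on Ch extends ->
  exists2 m, admissible m & forall p, Ch p -> extends p m.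
Proof.
move=> Ch_adm [p0 Chp0] Ch_tot.
have compat p q ab : Ch p /\ (p.1 `*` p.1) ab -> Ch q /\ (q.1 `*` q.1) ab ->
    p.2 ab = q.2 ab.
  by move=> [Chp pab] [Chq qab]; case: (Ch_tot p q Chp Chq) => -[_ E]; rewrite E.
have [f fP] := glue_compatible fst compat.
pose X t := exists2 p, Ch p & p.1 t.
have upper p q : Ch p -> Ch q -> exists2 r, Ch r & p.1 `<=` r.1 /\ q.1 `<=` r.1.
  move=> Chp Chq; case: (Ch_tot p q Chp Chq) => -[pq _].
    by exists q => //; split=> // t.
  by exists p => //; split=> // t.
have in_common a b : X a -> X b -> exists2 r, Ch r & r.1 a /\ r.1 b.
  move=> [p Chp pa] [q Chq qb]; have [r Chr [pr qr]] := upper p q Chp Chq.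
  by exists r; last split; [| exact: pr | exact: qr].
exists (X, f) => [|p Chp]; last first.
  by split=> [t pt|ab pab]; [exists p | exact: fP (conj Chp pab)].
split=> [t [p /Ch_adm[pB _ _] /pB] //|n|]; first by exists p0; have [] := Ch_adm p0 Chp0.
split=> [[a b] [Xa Xb]|[a b] [c d] [Xa Xb] [Xc Xd]].
  have [r Chr rab] := in_common a b Xa Xb; have [_ _ rXX] := Ch_adm r Chr.
  rewrite /= (fP r (a, b) (conj Chr rab)); exists r => //.
  exact: embeds_squareX rXX rab.1 rab.2.
have [r Chr [ra rb]] := in_common a b Xa Xb; have [s Chs [sc sd]] := in_common c d Xc Xd.
have [q Chq [rq sq]] := upper r s Chr Chs; have [_ _ [_ q_inj]] := Ch_adm q Chq.
have qab : (q.1 `*` q.1) (a, b) by split; exact: rq.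
have qcd : (q.1 `*` q.1) (c, d) by split; exact: sq.
by rewrite /= (fP q _ (conj Chq qab)) (fP q _ (conj Chq qcd)); exact: q_inj.
Qed.

Lemma injects_square : injects (B `*` B) B.
Proof.
have /choice[ginv ginvP] : forall t, exists n, (exists m, g m = t) -> g n = t.
  move=> t; have [[m <-]|nt] := pselect (exists m, g m = t); first by exists m.
  by exists 0%N => /nt.
have ginvK n : ginv (g n) = n by apply: g_inj; apply: ginvP; exists n.
pose f0 ab := g (pickle (ginv ab.1, ginv ab.2)).
have admissible0 : admissible (fun t => exists n, g n = t, f0).
  split=> [t [n <-] //|n|]; first by exists n.
  split=> [ab _|[a b] [c d] [/= [m <-] [n <-]] [/= [m' <-] [n' <-]]]; first by eexists.
  by move=> /g_inj/(pcan_inj pickleK); rewrite /= !ginvK => -[-> ->].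
have [|||[X f] [XB gX fXX] m_max] :=
  @zorn_nonempty_chains _ admissible extends _ admissible0.
- by move=> p; split.
- move=> p q r [pq1 pq2] [qr1 qr2]; split=> [t /pq1/qr1 //|ab [pa pb]].
  by rewrite qr2 ?pq2 //; split; [exact: pq1 | exact: pq1].
- exact: admissible_chain_ub.
have [[h [hX h_inj]]|[h [hX h_inj]]] := injects_total X (B `\` X); last first.
  exact: embeds_square_absorb fXX XB gX hX h_inj.
have [|f' [f'XX f'E]] := embeds_square_grow fXX gX _ h_inj.
  by move=> t /hX[].
have [] := m_max (X `|` h @` X, f'); first split=> //.
- by move=> t [/XB //|[s /hX[Bhs _] <-]].
- by move=> n; left; exact: gX.
- by split=> [t Xt|]; [left | exact: f'E].
move=> /(_ (h (g 0%N))) XYX _; have [_ []] := hX _ (gX 0%N).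
by apply: XYX; right; exists (g 0%N); first exact: gX.
Qed.

End Hessenberg.

Lemma unbounded_injective_seq (T : eqType) (B : set T) :
  ~ (exists s : seq T, forall b, B b -> b \in s) ->
  exists2 g : nat -> T, (forall n, B (g n)) & injective g.
Proof.
move=> B_unbounded; have /choice[pick pickP] : forall s : seq T, exists b, B b /\ b \notin s.
  move=> s; apply: contra_notP B_unbounded => nb.
  by exists s => b Bb; case: (boolP (b \in s)) => // bs; case: nb; exists b.
pose fix prefix n := if n is n'.+1 then rcons (prefix n') (pick (prefix n')) else [::].
have pick_prefix m n : (m < n)%N -> pick (prefix m) \in prefix n.
  elim: n => // n IHn; rewrite ltnS leq_eqVlt /= mem_rcons inE.
  by case/orP=> [/eqP->|/IHn->]; rewrite ?eqxx ?orbT.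
exists (fun n => pick (prefix n)) => [n|m n E]; first by have [] := pickP (prefix n).
case: (ltngtP m n) => // [mn|nm].
  by have [_] := pickP (prefix n); rewrite -E pick_prefix.
by have [_] := pickP (prefix m); rewrite E pick_prefix.
Qed.

Lemma injects_indexed_nat (I : eqType) (ws : seq I) (T U : Type) (B : set U)
    (h : I -> U -> T) (g : nat -> U) : (forall n, B (g n)) -> injective g ->
  injects (fun p : T * nat => exists i b, [/\ i \in ws, B b & p.1 = h i b]) (B `*` B).
Proof.
move=> gB g_inj.
have /choice[code codeP] : forall t, exists nb : nat * U,
    (exists i b, [/\ i \in ws, B b & t = h i b]) ->
    exists2 i, i \in ws /\ index i ws = nb.1 & B nb.2 /\ t = h i nb.2.
  move=> t; have [[i [b [iws Bb ->]]]|nt] := pselect (exists i b, [/\ i \in ws, B b & t = h i b]).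
    by exists (index i ws, b) => _; exists i.
  by exists (0%N, g 0%N) => /nt.
exists (fun p => ((code p.1).2, g (pickle ((code p.1).1, p.2)))).
split=> [[t m] /codeP[i _ [Bb _]]|[t m] [t' m'] /codeP[i [iws iE] [_ Et]]].
  by split=> //; exact: gB.
move=> /codeP[i' [i'ws i'E] [_ Et']] [Eb /g_inj/(pcan_inj pickleK)[Ei ->]].
rewrite /= in Et Et' *; rewrite Et Et' Eb; congr (h _ _, _).
by rewrite -(nth_index i iws) -(nth_index i i'ws) iE i'E Ei.
Qed.

Section FreeFamilies.
Variables (F : fieldType) (V : lmodType F).

(* Each element of C occurs in the chosen C-support of some element of T,
   otherwise it would lie in the span of the other elements of C. *)
Lemma lin_free_injects (C T : set V) : lin_free C ->
  (forall t, T t -> lspan C t) -> (forall c, C c -> lspan T c) ->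
  injects C (fun p : V * nat => T p.1).
Proof.
move=> Cfree TC CT.
have /choice[supp suppP] : forall t, exists s : seq V,
    T t -> (forall d, d \in s -> C d) /\ lspan (fun d => d \in s) t.
  move=> t; have [/TC[l [Cl El]]|nTt] := pselect (T t); last by exists [::] => /nTt.
  exists [seq p.2 | p <- l] => _; split; first by move=> d /mapP[p pl ->]; exact: Cl.
  by rewrite El; apply: lspan_sum => p pl; apply: lspan_gen; exact: map_f.
have /choice[tc tcP] : forall c, exists t, C c -> T t /\ c \in supp t.
  move=> c; have [[t Tt]|nTc] := pselect (exists t, T t /\ c \in supp t).
    by exists t.
  exists c => Cc; case: (lin_free_notin_lspan Cfree Cc).
  apply: sub_lspan (CT c Cc) => t Tt; have [suppC] := suppP t Tt.
  apply: sub_lspan => d ds; apply: lspan_gen; split; first exact: suppC.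
  by move=> dc; apply: nTc; exists t; rewrite -dc.
exists (fun c => (tc c, index c (supp (tc c)))).
split=> [c /tcP[] //|c c' /tcP[_ cs] /tcP[_ c's] [E Ei]].
by rewrite -[c](nth_index c cs) -[c'](nth_index c c's) Ei E.
Qed.

Lemma not_rank_lt_dim (I : eqType) (ws : seq I) (h : I -> V -> V) (w : V -> V) :
  infinite_dim V -> (forall i, linear (h i)) ->
  (forall v, lspan (fun t => exists i b, i \in ws /\ t = h i (w b)) v) ->
  ~ rank_lt_dim w.
Proof.
move=> Vinf h_lin Vspan [B [C [[BW [Bfree Bspan]] [[_ [Cfree Cspan]] CB]]]].
pose T t := exists i b, [/\ i \in ws, B b & t = h i b].
have VT v : lspan T v.
  apply: sub_lspan (Vspan v) => _ [i [b [iws ->]]].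
  have /in_spanE := Bspan (w b) (ex_intro _ b erefl).
  by apply: lspan_linear => // t Bt; apply: lspan_gen; exists i, t.
have [[s Bs]|/unbounded_injective_seq[g gB g_inj]] :=
    pselect (exists s : seq V, forall b, B b -> b \in s).
  case: Vinf; exists [seq h i b | i <- ws, b <- s] => v; apply/in_spanE.
  apply: sub_lspan (VT v) => _ [i [b [iws Bb ->]]]; apply: lspan_gen.
  by apply/allpairsP; exists (i, b); split=> //; exact: Bs.
have CT : injects C (fun p : V * nat => T p.1).
  apply: (lin_free_injects Cfree _ (fun c _ => VT c)) => t _.
  by apply/in_spanE; exact: Cspan.
apply/CB/(injects_trans CT)/(injects_trans _ (injects_square gB g_inj)).
exact: injects_indexed_nat gB g_inj.
Qed.

End FreeFamilies.

Lemma split_deg2P (F : fieldType) (p : {poly F}) :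
  split_deg2 p -> exists l a b : F, l != 0 /\ p = l *: (('X - a%:P) * ('X - b%:P)).
Proof.
case=> sz [a [b E]]; exists (lead_coef p), a, b; split=> //.
by rewrite lead_coef_eq0 -size_poly_eq0 sz.
Qed.

Section SplitQuadratic.
Variables (F : fieldType) (l a b : F).
Hypothesis l0 : l != 0.

Local Notation q := (l *: (('X - a%:P) * ('X - b%:P)) : {poly F}).

Let qE : q = l *: ('X^2 - (a + b) *: 'X + (a * b)%:P).
Proof. by congr (_ *: _); rewrite -mul_polyC polyCD polyCM; ring. Qed.

Let size_q : size q = 3%N.
Proof. by rewrite size_scale // size_mul ?polyXsubC_eq0 // !size_XsubC. Qed.

Let q_coef : [/\ q`_0 = l * (a * b), q`_1 = - (l * (a + b)) & q`_2 = l].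
Proof. by rewrite qE !coefE /=; split; ring. Qed.

Lemma root_split_deg2 x : root q x = (x == a) || (x == b).
Proof.
by rewrite /root hornerZ hornerM !hornerXsubC !mulf_eq0 (negPf l0) !subr_eq0.
Qed.

Lemma poly_trace_split_deg2 : poly_trace q = a + b.
Proof. by rewrite /poly_trace size_q lead_coefE size_q; case: q_coef => _ -> ->; field. Qed.

Lemma peval_endo_split_deg2 (V : lmodType F) (u : V -> V) v :
  peval_endo q u v = l *: (u (u v) - (a + b) *: u v + (a * b) *: v).
Proof.
rewrite /peval_endo size_q !big_ord_recl big_ord0 /=; case: q_coef => -> -> ->.
by lin_ring.
Qed.

Lemma peval_endo_split_deg2_eq0 (V : lmodType F) (u : V -> V) :
  (forall v, peval_endo q u v = 0) ->
  forall v, u (u v) - (a + b) *: u v + (a * b) *: v = 0.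
Proof.
by move=> qu v; have /eqP := qu v; rewrite peval_endo_split_deg2 scaler_eq0 (negPf l0) => /eqP.
Qed.

End SplitQuadratic.

Section Shift.
Variables (F : fieldType) (V : lmodType F) (u : V -> V) (a b : F).
Hypothesis u_lin : linear u.
HB.instance Definition _ := GRing.isLinear.Build F V V *:%R u u_lin.

Lemma linear_shift : linear (fun v => u v - a *: v).
Proof. by move=> k v1 v2 /=; rewrite linearD linearZ; lin_ring. Qed.

Lemma shift_sqr :
  (forall v, u (u v) - (a + b) *: u v + (a * b) *: v = 0) ->
  forall v, u (u v - a *: v) - a *: (u v - a *: v) = (b - a) *: (u v - a *: v).
Proof.
move=> uab v; apply/eqP; rewrite -subr_eq0 -(uab v) linearB linearZ.
by apply/eqP; lin_ring.
Qed.

End Shift.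

Fixpoint words (n : nat) : seq (seq bool) :=
  if n is n'.+1 then [::] :: [seq b :: s | b <- [:: true; false], s <- words n']
  else [:: [::]].

Lemma mem_words n (s : seq bool) : (size s <= n)%N -> s \in words n.
Proof.
elim: n s => [|n IHn] [|b s] //= /IHn s_n; rewrite inE mem_cat; apply/orP; right.
by apply/orP; case: b; [left | right; rewrite cats0]; exact: map_f.
Qed.

Section ShortWords.
Variables (F : fieldType) (V : lmodType F) (x y w z : V -> V) (d1 d2 d3 mu : F).
Hypotheses (x_lin : linear x) (y_lin : linear y).
HB.instance Definition _ := GRing.isLinear.Build F V V *:%R x x_lin.
HB.instance Definition _ := GRing.isLinear.Build F V V *:%R y y_lin.
Hypotheses (xx : forall v, x (x v) = d1 *: x v) (yy : forall v, y (y v) = d2 *: y v)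
  (zz : forall v, z (z v) = d3 *: z v) (zE : forall v, z v = mu *: v - x v - y v + w v).
Hypotheses (mu_generic : forall k1 k2 k3 : bool, mu != d1 *+ k1 + d2 *+ k2 + d3 *+ k3)
  (mu_trace : mu *+ 2 != d1 + d2 + d3).

Fixpoint word (s : seq bool) (v : V) : V :=
  if s is k :: s' then (if k then x else y) (word s' v) else v.

Lemma word_linear s : linear (word s).
Proof. by elim: s => [|[] s IHs] k u v //=; rewrite IHs linearP. Qed.

Definition wspan k := lspan (fun t => exists s v, (size s <= k)%N /\ t = word s (w v)).

Let wspan_mono k k' v : (k <= k')%N -> wspan k v -> wspan k' v.
Proof.
move=> kk'; apply: sub_lspan => _ [s [u [sk ->]]]; apply: lspan_gen.
by exists s, u; split=> //; exact: leq_trans kk'.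
Qed.

Let wspan_letter (k : bool) n v : wspan n v -> wspan n.+1 ((if k then x else y) v).
Proof.
apply: lspan_linear; first by case: k; exact: linearP.
by move=> _ [s [u [sn ->]]]; apply: lspan_gen; exists (k :: s), u.
Qed.

Let wspan_x n v : wspan n v -> wspan n.+1 (x v). Proof. exact: (@wspan_letter true n v). Qed.
Let wspan_y n v : wspan n v -> wspan n.+1 (y v). Proof. exact: (@wspan_letter false n v). Qed.

Let wspan_w v : wspan 0 (w v).
Proof. by apply: lspan_gen; exists [::], v. Qed.

Let mu_gap_neq0 (k1 k2 k3 : bool) : mu - d1 *+ k1 - d2 *+ k2 - d3 *+ k3 != 0.
Proof.
have := mu_generic k1 k2 k3; apply: contra_neq => E.
by apply/eqP; rewrite -subr_eq0 -E; apply/eqP; ring.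
Qed.

(* [quad v] is (z^2 - d3 z) v expanded with z replaced by mu - x - y; since
   z = mu - x - y + w, it differs from (z^2 - d3 z) v = 0 by an element of
   [wspan 1]. *)
Let quad v := x (y v) + y (x v) + (d1 + d3 - mu *+ 2) *: x v
  + (d2 + d3 - mu *+ 2) *: y v + (mu * (mu - d3)) *: v.

Let quad_wspan1 v : wspan 1 (quad v).
Proof.
have -> : quad v = - (w (z v) + (mu - d3) *: w v - x (w v) - y (w v))
    + (z (z v) - d3 *: z v).
  rewrite [z (z v)]zE !zE !(linearB, linearD, linearN, linearZ) /= xx yy /quad; lin_ring.
rewrite zz subrr addr0; apply/lspanN/lspanB; last exact/wspan_y/wspan_w.
apply: lspanB; last exact/wspan_x/wspan_w.
by apply: lspanD; [|apply: lspanZ]; apply: (wspan_mono (isT : 0 <= 1)%N).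
Qed.

Let comm v := x (y v) - y (x v).

Let comm_wspan2 v : wspan 2 (comm v).
Proof.
have tr0 : d1 + d2 + d3 - mu *+ 2 != 0 by rewrite subr_eq0 eq_sym.
apply: (lspanZ_inv tr0).
have -> : (d1 + d2 + d3 - mu *+ 2) *: comm v = x (quad v) - quad (x v).
  rewrite /quad /comm !(linearB, linearD, linearN, linearZ) /= !xx !linearZ /=; lin_ring.
apply: lspanB; first exact/wspan_x/quad_wspan1.
exact: (wspan_mono (isT : 1 <= 2)%N).
Qed.

Let xy_wspan3 v : wspan 3 (x (y v)).
Proof.
apply: (lspanZ_inv (mulf_neq0 (mu_gap_neq0 true true false) (mu_gap_neq0 true true true))).
rewrite (_ : _ *: _ =
    x (y (quad v)) + x (comm (y v)) + (d1 + d2 + d3 - mu *+ 2) *: x (comm v)).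
  apply: lspanD; last exact/lspanZ/wspan_x/comm_wspan2.
  by apply: lspanD; apply: wspan_x; [apply/wspan_y/quad_wspan1 | exact: comm_wspan2].
rewrite /quad /comm !(linearB, linearD, linearN, linearZ) /= !(xx, yy) !linearZ /=.
by lin_ring.
Qed.

Let x_wspan3 v : wspan 3 (x v).
Proof.
apply: (lspanZ_inv (mulf_neq0 (mu_gap_neq0 true false false) (mu_gap_neq0 true false true))).
rewrite (_ : _ *: _ =
    x (quad v) - (d1 + d1 + d2 + d3 - mu *+ 2) *: x (y v) + x (comm v)).
  apply: lspanD; last exact/wspan_x/comm_wspan2.
  apply: lspanB; last exact/lspanZ/xy_wspan3.
  exact/(wspan_mono (isT : 2 <= 3)%N)/wspan_x/quad_wspan1.
rewrite /quad /comm !(linearB, linearD, linearN, linearZ) /= !(xx, yy) !linearZ /=.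
by lin_ring.
Qed.

Let y_wspan4 v : wspan 4 (y v).
Proof.
apply: (lspanZ_inv (mulf_neq0 (mu_gap_neq0 false true false) (mu_gap_neq0 false true true))).
rewrite (_ : _ *: _ =
    y (quad v) - y (x (y v)) - (d1 + d2 + d3 - mu *+ 2) *: y (x v)).
  apply: lspanB; last exact/lspanZ/wspan_y/x_wspan3.
  apply: lspanB; last exact/wspan_y/xy_wspan3.
  exact/(wspan_mono (isT : 2 <= 4)%N)/wspan_y/quad_wspan1.
rewrite /quad /comm !(linearB, linearD, linearN, linearZ) /= !(xx, yy) !linearZ /=.
by lin_ring.
Qed.

Lemma wspan4_full v : wspan 4 v.
Proof.
apply: (lspanZ_inv (mulf_neq0 (mu_gap_neq0 false false false) (mu_gap_neq0 false false true))).
rewrite (_ : _ *: _ = quad v - x (y v) - y (x v) - (d1 + d3 - mu *+ 2) *: x v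
    - (d2 + d3 - mu *+ 2) *: y v).
  apply: lspanB; last exact/lspanZ/y_wspan4.
  apply: lspanB; last exact/lspanZ/(wspan_mono (isT : 3 <= 4)%N)/x_wspan3.
  apply: lspanB; last exact/wspan_y/x_wspan3.
  apply: lspanB; last exact/(wspan_mono (isT : 3 <= 4)%N)/xy_wspan3.
  exact/(wspan_mono (isT : 1 <= 4)%N)/quad_wspan1.
by rewrite /quad /=; lin_ring.
Qed.

End ShortWords.

Section QuadraticSums.
Variables (F : fieldType) (V : lmodType F).

Lemma sum3_not_dominant (u u1 u2 u3 : V -> V) (a1 b1 a2 b2 a3 b3 lambda : F) :
  infinite_dim V -> linear u1 -> linear u2 -> linear u3 ->
  (forall v, u1 (u1 v) - (a1 + b1) *: u1 v + (a1 * b1) *: v = 0) ->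
  (forall v, u2 (u2 v) - (a2 + b2) *: u2 v + (a2 * b2) *: v = 0) ->
  (forall v, u3 (u3 v) - (a3 + b3) *: u3 v + (a3 * b3) *: v = 0) ->
  (forall v, u v = u1 v + u2 v + u3 v) ->
  (forall k1 k2 k3 : bool, lambda != (if k1 then b1 else a1) +
     (if k2 then b2 else a2) + (if k3 then b3 else a3)) ->
  lambda *+ 2 != a1 + b1 + (a2 + b2) + (a3 + b3) ->
  ~ dominant_eigenvalue u lambda.
Proof.
move=> Vinf u1_lin u2_lin u3_lin u1_quad u2_quad u3_quad uE not_sum not_trace.
pose mu := lambda - a1 - a2 - a3.
have mu_generic (k1 k2 k3 : bool) :
    mu != (b1 - a1) *+ k1 + (b2 - a2) *+ k2 + (b3 - a3) *+ k3.
  have := not_sum k1 k2 k3; apply: contra_neq => E; apply/eqP; rewrite -subr_eq0.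
  apply/eqP; transitivity (mu - ((b1 - a1) *+ k1 + (b2 - a2) *+ k2 + (b3 - a3) *+ k3)).
    by rewrite /mu; case: k1 k2 k3 {E} => [] [] [] /=; ring.
  by rewrite E subrr.
have mu_trace : mu *+ 2 != (b1 - a1) + (b2 - a2) + (b3 - a3).
  apply: contra_neq not_trace => E; apply/eqP; rewrite -subr_eq0.
  apply/eqP; transitivity (mu *+ 2 - ((b1 - a1) + (b2 - a2) + (b3 - a3))).
    by rewrite /mu; ring.
  by rewrite E subrr.
have e3E v : u3 v - a3 *: v =
    mu *: v - (u1 v - a1 *: v) - (u2 v - a2 *: v) + (u v - lambda *: v).
  by rewrite uE /mu; lin_ring.
pose e1 v := u1 v - a1 *: v; pose e2 v := u2 v - a2 *: v.
have e1_lin : linear e1 := linear_shift a1 u1_lin.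
have e2_lin : linear e2 := linear_shift a2 u2_lin.
apply: (not_rank_lt_dim (ws := words 4) (h := word e1 e2) Vinf).
  by move=> s; exact: word_linear.
move=> v; apply: sub_lspan (wspan4_full e1_lin e2_lin (shift_sqr u1_lin u1_quad)
  (shift_sqr u2_lin u2_quad) (shift_sqr u3_lin u3_quad) e3E mu_generic mu_trace v).
by move=> _ [s [b [s4 ->]]]; apply: lspan_gen; exists s, b; split=> //; exact: mem_words.
Qed.

End QuadraticSums.

Theorem theorem3 (F : fieldType) (V : lmodType F) (p1 p2 p3 : {poly F})
    (u : V -> V) (lambda : F) :
  infinite_dim V ->
  split_deg2 p1 -> split_deg2 p2 -> split_deg2 p3 ->
  is_endo u ->
  dominant_eigenvalue u lambda ->
  endo_sum3 p1 p2 p3 u ->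
  scalar_sum3 p1 p2 p3 lambda \/
  2%:R * lambda = poly_trace p1 + poly_trace p2 + poly_trace p3.
Proof.
move=> Vinf /split_deg2P[l1 [a1 [b1 [l10 ->]]]] /split_deg2P[l2 [a2 [b2 [l20 ->]]]]
  /split_deg2P[l3 [a3 [b3 [l30 ->]]]] _ u_dom
  [u1 [u2 [u3 [[u1_lin u2_lin u3_lin] [uE [p1u1 [p2u2 p3u3]]]]]]].
rewrite !poly_trace_split_deg2 //.
have [|not_trace] := pselect (2%:R * lambda = a1 + b1 + (a2 + b2) + (a3 + b3)).
  by right.
left; apply: contraPP u_dom => not_sum.
have root_sum (k1 k2 k3 : bool) : lambda != (if k1 then b1 else a1) +
    (if k2 then b2 else a2) + (if k3 then b3 else a3).
  apply/eqP => E; apply: not_sum.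
  exists (if k1 then b1 else a1), (if k2 then b2 else a2), (if k3 then b3 else a3).
  by split=> //; split; rewrite root_split_deg2 //; case: ifP; rewrite eqxx ?orbT.
apply: (sum3_not_dominant Vinf u1_lin u2_lin u3_lin
  (peval_endo_split_deg2_eq0 l10 p1u1) (peval_endo_split_deg2_eq0 l20 p2u2)
  (peval_endo_split_deg2_eq0 l30 p3u3) uE root_sum).
by rewrite -mulr_natl; apply/eqP.
Qed.
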